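(* For every integer $k\ge 4$, the set $S_k$ is not complete, and there exists an uncompletable word for $S_k$ of length $5k^2-17k+13$.
   Context: $\Sigma=\{a,b\}$. $S_k=\left(\Sigma^k\setminus\{ba^{k-1},b^{k-1}a\}\right)\cup\left(\Sigma^{k-1}\setminus\{a^{k-1},b^{k-1}\}\right)$. For a finite set $S$ of words, $\mathit{Fact}(S^* )$ is the set of all factors of words in $S^*$. $S$ is complete if $\mathit{Fact}(S^* )=\Sigma^*$; a word $w\in\Sigma^*\setminus\mathit{Fact}(S^* )$ is called uncompletable for $S$. *)

From mathcomp Require Import all_boot.
Set Implicit Arguments. Unset Strict Implicit. Unset Printing Implicit Defensive.

Definition la : bool := false.
Definition lb : bool := true.

Definition Sk (k : nat) (w : seq bool) : bool :=
  ((size w == k) && (w != lb :: nseq k.-1 la) && (w != rcons (nseq k.-1 lb) la))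
  || ((size w == k.-1) && (w != nseq k.-1 la) && (w != nseq k.-1 lb)).

Definition in_star (S : seq bool -> bool) (w : seq bool) : Prop :=
  exists ws : seq (seq bool), all S ws /\ w = flatten ws.

Definition in_Fact (S : seq bool -> bool) (w : seq bool) : Prop :=
  exists u, in_star S u /\ infix w u.

Definition complete (S : seq bool -> bool) : Prop := forall w, in_Fact S w.

Definition uncompletable (S : seq bool -> bool) (w : seq bool) : Prop :=
  ~ in_Fact S w.

From mathcomp Require Import all_boot zify.
Set Implicit Arguments. Unset Strict Implicit. Unset Printing Implicit Defensive.

(* The uncompletable word is
     [witness k = b a^k b^(k-1) B_1 ... B_(k-3) a],  [B_i = a^(k+i) b^(2k-3-i) a^k b^(k-1)].
   Suppose it is a factor of a product of words of S_k, and call the lag at a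
   position the distance back to the nearest cut of the factorization.  Since S_k
   contains no constant word of length k - 1, cuts inside a run of one letter
   are exactly k apart.  Hence the lag at the end of a run is determined, modulo
   k, by the length of the run and by how far the one word straddling its start
   reaches into it; the excluded words b a^(k-1) and b^(k-1) a rule out some of
   these straddling words.  Chasing the possible lags through the runs shows
   that just before B_i the lag is k - 1 or at most k - 1 - i.  After the last
   block the lag must therefore be k - 1, which forces the excluded word
   b^(k-1) a onto the final letter. *)

Lemma Sk_size k w : Sk k w -> size w = k \/ size w = k.-1.
Proof. by case/orP=> /andP[/andP[/eqP-> _] _]; [left | right]. Qed.

Lemma Sk_nseq k x : 0 < k -> ~~ Sk k (nseq k.-1 x).
Proof.
move=> k_gt0; rewrite /Sk size_nseq (_ : (k.-1 == k) = false); last by lia.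
by case: x; rewrite /la /lb !eqxx /= ?andbF.
Qed.

Lemma Sk_b_nseq_a k : ~~ Sk k (lb :: nseq k.-1 la).
Proof.
rewrite /Sk /= size_nseq eqxx /= andbF /=.
by rewrite (_ : (k.-1.+1 == k.-1) = false) //; lia.
Qed.

Lemma Sk_rcons_nseq_b_a k : ~~ Sk k (rcons (nseq k.-1 lb) la).
Proof.
rewrite /Sk size_rcons size_nseq eqxx /= andbF /=.
by rewrite (_ : (k.-1.+1 == k.-1) = false) //; lia.
Qed.

Lemma modn_lt_double m d : m < 2 * d -> m %% d = if m < d then m else m - d.
Proof.
move=> m_lt; case: ltnP => [|d_le]; first exact: modn_small.
by rewrite -{1}(subnK d_le) modnDr modn_small //; lia.
Qed.

Definition slice T (u : seq T) i j := take (j - i) (drop i u).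

Lemma size_slice T (u : seq T) i j : j <= size u -> size (slice u i j) = j - i.
Proof. by move=> j_le; rewrite size_takel // size_drop leq_sub2r. Qed.

Lemma nth_slice T x0 (u : seq T) i j n :
  n < j - i -> nth x0 (slice u i j) n = nth x0 u (i + n).
Proof. by move=> n_lt; rewrite nth_take // nth_drop. Qed.

Lemma slice_cons T x0 (u : seq T) i j :
  i < j <= size u -> slice u i j = nth x0 u i :: slice u i.+1 j.
Proof.
case/andP=> i_lt j_le; rewrite /slice (drop_nth x0); last by lia.
by rewrite (_ : j - i = (j - i.+1).+1) //; lia.
Qed.

Lemma slice_rcons T x0 (u : seq T) i j :
  i <= j < size u -> slice u i j.+1 = rcons (slice u i j) (nth x0 u j).
Proof.
case/andP=> i_le j_lt; rewrite /slice subSn // (take_nth x0); last by rewrite size_drop; lia.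
by rewrite nth_drop subnKC.
Qed.

Lemma slice_cat T (u v : seq T) i j : slice (u ++ v) (size u + i) (size u + j) = slice v i j.
Proof. by rewrite /slice subnDl addnC -drop_drop drop_size_cat. Qed.

Definition run (u : seq bool) x i j := forall n, i <= n < j -> nth false u n = x.

Lemma run_sub u x i j i' j' : run u x i j -> i <= i' -> j' <= j -> run u x i' j'.
Proof. by move=> hrun i_le j_le n n_in; apply: hrun; lia. Qed.

Lemma run_cat w1 w2 x n i : i = size w1 -> run (w1 ++ nseq n x ++ w2) x i (i + n).
Proof.
move=> -> m /andP[m_ge m_lt]; rewrite nth_cat ltnNge m_ge /= nth_cat size_nseq.
by rewrite ltn_subLR // m_lt nth_nseq ltn_subLR // m_lt.
Qed.

Lemma slice_run u x i j : run u x i j -> j <= size u -> slice u i j = nseq (j - i) x.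
Proof.
move=> hrun j_le; apply: (@eq_from_nth _ false); first by rewrite size_slice ?size_nseq.
move=> n; rewrite size_slice // => n_lt.
by rewrite nth_slice // nth_nseq n_lt hrun //; lia.
Qed.

Lemma slice_b_nseq_a u s k : nth false u s.-1 = lb -> 0 < s -> run u la s (s + k.-1) ->
  s + k.-1 <= size u -> slice u s.-1 (s + k.-1) = lb :: nseq k.-1 la.
Proof.
move=> b_before s_gt0 hrun e_le; rewrite (slice_cons false); last by lia.
by rewrite b_before prednK // (slice_run hrun) //; congr (_ :: nseq _ _); lia.
Qed.

Lemma slice_nseq_b_a u s k : k.-1 <= s -> run u lb (s - k.-1) s -> nth false u s = la ->
  s < size u -> slice u (s - k.-1) s.+1 = rcons (nseq k.-1 lb) la.
Proof.
move=> s_ge hrun a_at s_lt.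
rewrite (slice_rcons false) ?a_at ?(slice_run hrun) ?subKn //; lia.
Qed.

Definition block k i :=
  nseq (k + i) la ++ nseq (2 * k - 3 - i) lb ++ nseq k la ++ nseq k.-1 lb.

Definition witness k :=
  lb :: nseq k la ++ nseq k.-1 lb ++ flatten [seq block k i | i <- iota 1 (k - 3)] ++ [:: la].

Definition block_entry k i : pred nat :=
  [pred d | (d == k.-1) || (i + 2 < k) && (0 < d < k - i)].

Section Factorization.
Variables (k : nat) (u : seq bool) (cut : pred nat).

Definition consecutive c c' :=
  [/\ cut c, cut c', c < c' & forall q, c < q < c' -> ~~ cut q].

Hypothesis k_gt1 : 1 < k.
Hypothesis cut0 : cut 0.
Hypothesis cut_size : cut (size u).
Hypothesis cut_le_size : forall c, cut c -> c <= size u.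
Hypothesis Sk_consecutive : forall c c', consecutive c c' -> Sk k (slice u c c').

Lemma consecutive_exists c : cut c -> c < size u -> exists c', consecutive c c'.
Proof.
move=> cut_c c_lt.
have ex_next : exists n, (c < n) && cut n by exists (size u); rewrite c_lt cut_size.
case: (ex_minnP ex_next) => c' /andP[c_lt' cut_c'] c'_min.
exists c'; split=> // q /andP[c_lt_q q_lt]; apply/negP => cut_q.
by have := c'_min q; rewrite c_lt_q cut_q leqNgt q_lt => /(_ isT).
Qed.

Lemma consecutive_gap c c' : consecutive c c' -> c' - c = k.-1 \/ c' - c = k.
Proof.
move=> cc'; have [c_lt c'_le] : c < c' /\ c' <= size u by case: cc' => _ /cut_le_size.
by have /Sk_size := Sk_consecutive cc'; rewrite size_slice //; case; auto.
Qed.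

Lemma consecutive_in_run x s e c c' :
  run u x s e -> s <= c -> c' <= e -> e <= size u -> consecutive c c' -> c' - c = k.
Proof.
move=> hrun s_le e_ge e_le cc'; have [_ _ c_lt _] := cc'.
case: (consecutive_gap cc') => // gap.
have mono : slice u c c' = nseq k.-1 x.
  by rewrite -gap; apply: slice_run; [exact: run_sub hrun s_le e_ge | lia].
by have := Sk_consecutive cc'; rewrite mono (negbTE (Sk_nseq _ _)) //; lia.
Qed.

Definition lag p d := [/\ d <= p, cut (p - d) & forall q, p - d < q <= p -> ~~ cut q].

Definition lag_in (P : pred nat) p := forall d, lag p d -> P d.

Lemma lag_exists p : exists d, lag p d.
Proof.
have ex_cut : exists n, (n <= p) && cut n by exists 0; rewrite cut0.
have bounded : forall n, (n <= p) && cut n -> n <= p by move=> n /andP[].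
case: (ex_maxnP ex_cut bounded) => c /andP[c_le cut_c] c_max.
exists (p - c); rewrite /lag subKn //; split=> //; first exact: leq_subr.
move=> q /andP[c_lt q_le]; apply/negP => cut_q.
by have := c_max q; rewrite q_le cut_q leqNgt c_lt => /(_ isT).
Qed.

Lemma lag_eq p d c :
  lag p d -> cut c -> c <= p -> (forall q, c < q <= p -> ~~ cut q) -> d = p - c.
Proof.
case=> d_le cut_pd none_after cut_c c_le none_after_c.
case: (ltngtP (p - d) c) => [lt | gt | eq]; last by lia.
- by have := none_after c; rewrite lt c_le cut_c => /(_ isT).
- by have := none_after_c (p - d); rewrite gt leq_subr cut_pd => /(_ isT).
Qed.

Lemma lag_run_from_cut x s e f d :
  run u x s e -> e <= size u -> s <= f <= e -> cut f -> lag e d -> d = (e - f) %% k.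
Proof.
move=> hrun e_le; have [n] := ubnP (e - f); elim: n f => // n IH f ef_lt f_in cut_f lag_e.
case: (ltnP f e) => [f_lt | e_le_f]; last first.
  have f_eq : f = e by lia.
  rewrite f_eq in cut_f *; rewrite (lag_eq lag_e cut_f) ?subnn ?mod0n //.
  by move=> q; lia.
have [c' cc'] := consecutive_exists cut_f (leq_trans f_lt e_le).
have [_ cut_c' f_lt' none_between] := cc'.
case: (leqP c' e) => [c'_le | e_lt].
  have gap : c' - f = k by apply: consecutive_in_run hrun _ c'_le e_le cc'; lia.
  rewrite (IH c') //; try lia.
  by rewrite (_ : e - f = e - c' + k) ?modnDr //; lia.
rewrite (lag_eq lag_e cut_f) ?modn_small //; try lia.
- by case: (consecutive_gap cc'); lia.
- by move=> q q_in; apply: none_between; lia.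
Qed.

Lemma lag_next_cut p d : lag p d -> p < size u -> exists c', consecutive (p - d) c' /\ p < c'.
Proof.
move=> [d_le cut_pd none_after] p_lt.
have [c' cc'] := consecutive_exists cut_pd (leq_ltn_trans (leq_subr d p) p_lt).
exists c'; split=> //; have [_ cut_c' lt_c' _] := cc'.
rewrite ltnNge; apply/negP => c'_le.
by have := none_after c'; rewrite lt_c' c'_le cut_c' => /(_ isT).
Qed.

Lemma lag_after_run x s e d d' :
  run u x s e -> k.-1 <= e - s -> e <= size u -> lag s d -> lag e d' ->
  d = 0 /\ d' = (e - s) %% k \/
  exists g, [/\ g = k.-1 \/ g = k, 0 < d < g,
                Sk k (slice u (s - d) (s - d + g)) & d' = (e - s + d - g) %% k].
Proof.
move=> hrun len_ge e_le lag_s lag_e.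
case: (posnP d) => [d0 | d_gt0].
  left; split=> //; apply: lag_run_from_cut hrun e_le _ _ lag_e; first by lia.
  by case: lag_s; rewrite d0 subn0.
have [c' [cc' s_lt]] : exists c', consecutive (s - d) c' /\ s < c'.
  by apply: lag_next_cut lag_s _; lia.
have [_ cut_c' _ _] := cc'; have gap := consecutive_gap cc'; have [d_le _ _] := lag_s.
right; exists (c' - (s - d)); rewrite subnKC; last by lia.
split; [lia | lia | exact: Sk_consecutive |].
by rewrite (lag_run_from_cut hrun e_le _ cut_c' lag_e); [congr (_ %% _) | ]; lia.
Qed.

Lemma lag_after_a_run_after_b s e d d' :
  nth false u s.-1 = lb -> 0 < s -> run u la s e -> k.-1 <= e - s -> e <= size u ->
  lag s d -> lag e d' ->
  d = 0 /\ d' = (e - s) %% k \/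
  exists g, [/\ g = k.-1 \/ g = k, 0 < d < g, d = 1 -> g = k.-1
              & d' = (e - s + d - g) %% k].
Proof.
move=> b_before s_gt0 hrun len_ge e_le lag_s lag_e.
have [|[g [g_in d_in hS ->]]] := lag_after_run hrun len_ge e_le lag_s lag_e; first by left.
right; exists g; split=> // d1; case: g_in => // g_k; move: hS.
rewrite d1 g_k subn1 (_ : s.-1 + k = s + k.-1); last by lia.
rewrite slice_b_nseq_a ?(negbTE (Sk_b_nseq_a k)) //; last by lia.
by apply: run_sub hrun _ _; lia.
Qed.

Lemma not_lag_before_bk1_a s :
  k.-1 <= s -> run u lb (s - k.-1) s -> nth false u s = la -> s < size u -> ~ lag s k.-1.
Proof.
move=> s_ge b_run a_at s_lt lag_s.
have [c' [cc' s_lt']] := lag_next_cut lag_s s_lt.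
have c'_eq : c' = s.+1 by case: (consecutive_gap cc'); lia.
have := Sk_consecutive cc'.
by rewrite c'_eq slice_nseq_b_a ?(negbTE (Sk_rcons_nseq_b_a k)).
Qed.

Lemma lag_after_a_run_after_bk1 s e d d' :
  k.-1 <= s -> run u lb (s - k.-1) s -> run u la s e -> k.-1 <= e - s -> e <= size u ->
  lag s d -> lag e d' ->
  d = 0 /\ d' = (e - s) %% k \/
  exists g, [/\ g = k.-1 \/ g = k, 0 < d < k.-1, d = 1 -> g = k.-1
              & d' = (e - s + d - g) %% k].
Proof.
move=> s_ge b_run hrun len_ge e_le lag_s lag_e.
have b_before : nth false u s.-1 = lb by apply: b_run; lia.
have s_gt0 : 0 < s by lia.
have [|[g [g_in d_in d1 ->]]] := lag_after_a_run_after_b b_before s_gt0 hrun len_ge e_le lag_s lag_e.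
  by left.
right; exists g; split=> //.
have d_ne : d != k.-1.
  apply/eqP => d_eq; rewrite d_eq in lag_s; apply: not_lag_before_bk1_a lag_s => //; last by lia.
  by apply: hrun; lia.
by lia.
Qed.

Lemma lag_in_weaken (P Q : pred nat) p : (forall d, P d -> Q d) -> lag_in P p -> lag_in Q p.
Proof. by move=> PQ hP d /hP /PQ. Qed.

Lemma lag_after_b_ak s :
  nth false u s.-1 = lb -> 0 < s -> run u la s (s + k) -> s + k <= size u ->
  lag_in [pred d | (d == 0) || (1 < d < k)] (s + k).
Proof.
move=> b_before s_gt0 hrun e_le d' lag_e; have [d lag_s] := lag_exists s.
have len : k.-1 <= s + k - s by lia.
have [[_ ->]|[g [g_in d_in d1 ->]]] :=
  lag_after_a_run_after_b b_before s_gt0 hrun len e_le lag_s lag_e; rewrite /= addKn ?modnn //.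
by rewrite modn_lt_double; [case: ifP => ? | ]; lia.
Qed.

Lemma lag_after_bk1_aki i s : i + 2 < k ->
  k.-1 <= s -> run u lb (s - k.-1) s -> run u la s (s + (k + i)) -> s + (k + i) <= size u ->
  lag_in (block_entry k i) s -> lag_in [pred d | (d == 0) || (i + 1 < d < k)] (s + (k + i)).
Proof.
move=> i_lt s_ge b_run hrun e_le entry d' lag_e; have [d lag_s] := lag_exists s.
have := entry d lag_s; rewrite /block_entry /= => d_in.
have len : k.-1 <= s + (k + i) - s by lia.
have [[d0 _]|[g [g_in d_in' d1 ->]]] :=
  lag_after_a_run_after_bk1 s_ge b_run hrun len e_le lag_s lag_e; first by lia.
by rewrite /= addKn modn_lt_double; [case: ifP => ? | ]; lia.
Qed.

Lemma lag_after_b2k3i i s : i + 2 < k ->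
  run u lb s (s + (2 * k - 3 - i)) -> s + (2 * k - 3 - i) <= size u ->
  lag_in [pred d | (d == 0) || (i + 1 < d < k)] s ->
  lag_in [pred d | (d == k.-1) || (d + i + 3 <= k)] (s + (2 * k - 3 - i)).
Proof.
move=> i_lt hrun e_le entry d' lag_e; have [d lag_s] := lag_exists s.
have /= d_in := entry d lag_s; have len : k.-1 <= s + (2 * k - 3 - i) - s by lia.
have [[_ ->]|[g [g_in d_in' _ ->]]] := lag_after_run hrun len e_le lag_s lag_e;
  by rewrite /= addKn modn_lt_double; [case: ifP => ? | ]; lia.
Qed.

Lemma lag_after_bk1_ak i s :
  k.-1 <= s -> run u lb (s - k.-1) s -> run u la s (s + k) -> s + k <= size u ->
  lag_in [pred d | (d == k.-1) || (d + i + 3 <= k)] s ->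
  lag_in [pred d | (d == 0) || (1 < d) && (d + i + 2 <= k)] (s + k).
Proof.
move=> s_ge b_run hrun e_le entry d' lag_e; have [d lag_s] := lag_exists s.
have /= d_in := entry d lag_s; have len : k.-1 <= s + k - s by lia.
have [[_ ->]|[g [g_in d_in' d1 ->]]] :=
  lag_after_a_run_after_bk1 s_ge b_run hrun len e_le lag_s lag_e; rewrite /= addKn ?modnn //.
by rewrite modn_lt_double; [case: ifP => ? | ]; lia.
Qed.

Lemma lag_after_bk1 i s : run u lb s (s + k.-1) -> s + k.-1 <= size u ->
  lag_in [pred d | (d == 0) || (1 < d) && (d + i + 1 <= k)] s ->
  lag_in (block_entry k i) (s + k.-1).
Proof.
move=> hrun e_le entry d' lag_e; have [d lag_s] := lag_exists s.
have /= d_in := entry d lag_s; have len : k.-1 <= s + k.-1 - s by lia.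
have [[_ ->]|[g [g_in d_in' _ ->]]] := lag_after_run hrun len e_le lag_s lag_e;
  by rewrite /block_entry /= addKn modn_small; lia.
Qed.

Lemma lag_across_block i pre post : i + 2 < k ->
  u = pre ++ nseq k.-1 lb ++ block k i ++ post ->
  lag_in (block_entry k i) (size pre + k.-1) ->
  exists pre', u = pre' ++ nseq k.-1 lb ++ post /\
               lag_in (block_entry k i.+1) (size pre' + k.-1).
Proof.
move=> i_lt hu entry.
have u_size : size pre + k.-1 + (k + i) + (2 * k - 3 - i) + k + k.-1 <= size u.
  by rewrite hu /block !size_cat !size_nseq; lia.
have bs0 : run u lb (size pre + k.-1 - k.-1) (size pre + k.-1).
  by rewrite addnK hu; apply: run_cat.
have as1 : run u la (size pre + k.-1) (size pre + k.-1 + (k + i)).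
  by rewrite hu /block -!catA catA; apply: run_cat; rewrite size_cat size_nseq.
have bs2 : run u lb (size pre + k.-1 + (k + i))
                    (size pre + k.-1 + (k + i) + (2 * k - 3 - i)).
  by rewrite hu /block -!catA 2!catA; apply: run_cat; rewrite !size_cat !size_nseq.
have as3 : run u la (size pre + k.-1 + (k + i) + (2 * k - 3 - i))
                    (size pre + k.-1 + (k + i) + (2 * k - 3 - i) + k).
  by rewrite hu /block -!catA 3!catA; apply: run_cat; rewrite !size_cat !size_nseq.
have bs4 : run u lb (size pre + k.-1 + (k + i) + (2 * k - 3 - i) + k)
                    (size pre + k.-1 + (k + i) + (2 * k - 3 - i) + k + k.-1).
  by rewrite hu /block -!catA 4!catA; apply: run_cat; rewrite !size_cat !size_nseq.
have lag1 : lag_in [pred d | (d == 0) || (i + 1 < d < k)] (size pre + k.-1 + (k + i)).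
  by apply: lag_after_bk1_aki bs0 as1 _ entry; lia.
have lag2 : lag_in [pred d | (d == k.-1) || (d + i + 3 <= k)]
                   (size pre + k.-1 + (k + i) + (2 * k - 3 - i)).
  by apply: lag_after_b2k3i bs2 _ lag1; lia.
have lag3 : lag_in [pred d | (d == 0) || (1 < d) && (d + i + 2 <= k)]
                   (size pre + k.-1 + (k + i) + (2 * k - 3 - i) + k).
  by apply: lag_after_bk1_ak (run_sub bs2 _ _) as3 _ lag2; lia.
exists (pre ++ nseq k.-1 lb ++ nseq (k + i) la ++ nseq (2 * k - 3 - i) lb ++ nseq k la).
split; first by rewrite hu /block -!catA.
have -> : size (pre ++ nseq k.-1 lb ++ nseq (k + i) la ++ nseq (2 * k - 3 - i) lb ++ nseq k la)
  = size pre + k.-1 + (k + i) + (2 * k - 3 - i) + k by rewrite !size_cat !size_nseq; lia.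
by apply: lag_after_bk1 bs4 _ (lag_in_weaken _ lag3) => [|d /=]; lia.
Qed.

Lemma lag_across_blocks j i pre post : i + j + 1 < k ->
  u = pre ++ nseq k.-1 lb ++ flatten [seq block k n | n <- iota i j] ++ post ->
  lag_in (block_entry k i) (size pre + k.-1) ->
  exists pre', u = pre' ++ nseq k.-1 lb ++ post /\
               lag_in (block_entry k (i + j)) (size pre' + k.-1).
Proof.
elim: j i pre => [|j IH] i pre ij_lt hu entry; first by exists pre; rewrite addn0 hu.
have i_lt : i + 2 < k by lia.
have hu1 : u = pre ++ nseq k.-1 lb ++ block k i ++
                 (flatten [seq block k n | n <- iota i.+1 j] ++ post).
  by rewrite hu /= -catA.
have [pre' [hu' entry']] := lag_across_block i_lt hu1 entry.
by rewrite -addSnnS; apply: IH hu' entry'; lia.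
Qed.

Lemma witness_not_factor x y : 3 < k -> u <> x ++ witness k ++ y.
Proof.
move=> k_gt3 hu.
set pre := x ++ lb :: nseq k la.
have hu0 : u = pre ++ nseq k.-1 lb ++ flatten [seq block k n | n <- iota 1 (k - 3)] ++ [:: la] ++ y.
  by rewrite hu /pre /witness -!catA /= -!catA.
have pre_size : size pre = (size x).+1 + k by rewrite size_cat /= size_nseq addnS.
have b_first : nth false u (size x).+1.-1 = lb by rewrite hu nth_cat ltnn subnn.
have as_first : run u la (size x).+1 ((size x).+1 + k).
  by rewrite hu /witness -cat1s -!catA catA; apply: run_cat; rewrite size_cat addn1.
have bs_first : run u lb (size pre) (size pre + k.-1) by rewrite hu0; apply: run_cat.
have u_size : size pre + k.-1 <= size u by rewrite hu0 !size_cat size_nseq; lia.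
have lag0 : lag_in [pred d | (d == 0) || (1 < d < k)] (size pre).
  by rewrite pre_size; apply: lag_after_b_ak b_first _ as_first _; lia.
have lag1 : lag_in (block_entry k 1) (size pre + k.-1).
  apply: lag_in_weaken (lag_after_bk1 (i := 0) bs_first u_size _) => [d|].
    by rewrite /block_entry /=; lia.
  by apply: lag_in_weaken lag0 => d /=; lia.
have blocks_lt : 1 + (k - 3) + 1 < k by lia.
have [pre' [hu' lag_end]] := lag_across_blocks blocks_lt hu0 lag1.
have [d lag_d] := lag_exists (size pre' + k.-1).
have d_eq : d = k.-1 by have := lag_end d lag_d; rewrite /block_entry /=; lia.
move: lag_d; rewrite d_eq; apply: not_lag_before_bk1_a.
- by lia.
- by rewrite addnK hu'; apply: run_cat.
- by rewrite hu' catA nth_cat size_cat size_nseq ltnn subnn.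
- by rewrite hu' !size_cat size_nseq /=; lia.
Qed.

End Factorization.

Fixpoint cuts T (ws : seq (seq T)) : seq nat :=
  if ws is w :: ws' then 0 :: map (addn (size w)) (cuts ws') else [:: 0].

Lemma mem0_cuts T (ws : seq (seq T)) : 0 \in cuts ws.
Proof. by case: ws. Qed.

Lemma size_flatten_in_cuts T (ws : seq (seq T)) : size (flatten ws) \in cuts ws.
Proof. by elim: ws => //= w ws IH; rewrite inE size_cat map_f ?orbT. Qed.

Lemma cuts_le_size T (ws : seq (seq T)) c : c \in cuts ws -> c <= size (flatten ws).
Proof.
elim: ws c => [|w ws IH] c /=; first by rewrite inE => /eqP->.
by rewrite inE size_cat => /orP[/eqP-> // | /mapP[c0 /IH c0_le ->]]; rewrite leq_add2l.
Qed.

Lemma mem_cuts_cons T (w : seq T) ws c :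
  (c \in cuts (w :: ws)) = (c == 0) || (size w <= c) && (c - size w \in cuts ws).
Proof.
rewrite /= inE; congr (_ || _); apply/mapP/andP => [[c0 c0_in ->] | [w_le c_in]].
  by rewrite leq_addr addKn.
by exists (c - size w); rewrite ?subnKC.
Qed.

Lemma slice_consecutive_cuts (T : eqType) (ws : seq (seq T)) c c' :
  consecutive (fun n => n \in cuts ws) c c' -> slice (flatten ws) c c' \in ws.
Proof.
elim: ws c c' => [|w ws IH] c c' [] /=; first by rewrite !inE => /eqP-> /eqP->.
rewrite !mem_cuts_cons => cut_c cut_c' c_lt none_between.
have c'_in : c' - size w \in cuts ws by case/orP: cut_c' => [/eqP c'0 | /andP[]]; first lia.
case: (leqP (size w) c) => [w_le | c_lt_w].
  have c_in : c - size w \in cuts ws.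
    by case/orP: cut_c => [/eqP-> | /andP[]]; rewrite ?sub0n ?mem0_cuts.
  rewrite -(subnKC w_le) -(subnKC (ltnW (leq_ltn_trans w_le c_lt))) slice_cat inE.
  apply/orP; right; apply: IH; split=> // [|q q_in]; first by lia.
  apply/negP => q_cut; have := none_between (size w + q).
  by rewrite mem_cuts_cons addKn q_cut leq_addr orbT; lia.
have c0 : c = 0 by case/orP: cut_c => [/eqP | /andP[]]; lia.
have c'_eq : c' = size w.
  apply/eqP; rewrite eqn_leq; apply/andP; split; last first.
    by case/orP: cut_c' => [/eqP | /andP[]]; lia.
  rewrite leqNgt; apply/negP => w_lt; have := none_between (size w).
  by rewrite mem_cuts_cons subnn mem0_cuts leqnn orbT; lia.
by rewrite c0 c'_eq /slice subn0 drop0 take_size_cat // mem_head.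
Qed.

Lemma witness_uncompletable k : 3 < k -> uncompletable (Sk k) (witness k).
Proof.
move=> k_gt3 [_ [[ws [Sk_ws ->]] /infixP[x [y hu]]]].
apply: (witness_not_factor (cut := fun c => c \in cuts ws)) hu => //.
- by lia.
- exact: mem0_cuts.
- exact: size_flatten_in_cuts.
- exact: cuts_le_size.
- by move=> c c' /slice_consecutive_cuts /(allP Sk_ws).
Qed.

Lemma size_blocks k i j : i + j <= k - 2 ->
  size (flatten [seq block k n | n <- iota i j]) = j * (5 * k - 4).
Proof.
elim: j i => [|j IH] i ij_le //=.
by rewrite size_cat IH /block ?size_cat ?size_nseq; lia.
Qed.

Lemma size_witness k : 3 < k -> size (witness k) = 5 * k ^ 2 + 13 - 17 * k.
Proof.
move=> k_gt3; rewrite /= !size_cat !size_nseq size_blocks /=; last by lia.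
by rewrite -mulnn; nia.
Qed.

Theorem theorem1 (k : nat) (hk : 4 <= k) :
  ~ complete (Sk k) /\
  exists w : seq bool, size w = 5 * k ^ 2 + 13 - 17 * k /\ uncompletable (Sk k) w.
Proof.
split; first by move=> complete_Sk; apply: (witness_uncompletable hk (complete_Sk (witness k))).
by exists (witness k); split; [exact: size_witness | exact: witness_uncompletable].
Qed.
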